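(* Let $(X,d)$ be a bounded metric space and let $M: X\to\mathbb{R}$ satisfy $d(x,y)\le M(x)\le d(x,z)+M(z)$ for all $x,y,z\in X$. Let $d_S$ be the subset distance on $\mathcal{F}(X)$ defined in the context. Then for any $X_1,X_2\in\mathcal{F}(X)$, $d_S(X_1,X_2)=d_S(X_1\setminus X_2,\,X_2\setminus X_1)$.
   Context: $\mathcal{F}(X)$ denotes the set of all finite subsets of $X$ (including the empty set). For $A,B\in\mathcal{F}(X)$ with $|A|\le|B|$ and an injection $\chi:A\to B$, define $d_\chi(A,B)=\sum_{x\in A} d(x,\chi(x))+\sum_{y\in B\setminus\chi(A)} M(y)$. The subset distance is $d_S(A,B)=d_S(B,A)=\min\{d_\chi(A,B) : \chi:A\to B \text{ an injection}\}$ (for $|A|\le|B|$). *)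

From HB Require Import structures.
From mathcomp Require Import all_boot all_order all_algebra finmap.
From mathcomp Require Import reals constructive_ereal.
Set Implicit Arguments. Unset Strict Implicit. Unset Printing Implicit Defensive.
Import Order.TTheory GRing.Theory Num.Theory.
Local Open Scope ring_scope.


Definition is_metric (R : realType) (X : Type) (d : X -> X -> R) : Prop :=
  [/\ forall x y, 0 <= d x y,
      forall x y, d x y = 0 <-> x = y,
      forall x y, d x y = d y x &
      forall x y z, d x z <= d x y + d y z].

Definition bounded_metric (R : realType) (X : Type) (d : X -> X -> R) : Prop :=
  exists K : R, forall x y, d x y <= K.

(* d_chi(A,B) for an injection chi : A -> B (elements of the finite sets A, B
   are the members of the finite subtypes of X they induce). *)
Definition d_chi (R : realType) (X : choiceType) (d : X -> X -> R) (M : X -> R)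
    (A B : {fset X}) (chi : {ffun A -> B}) : R :=
  \sum_(x : A) d (val x) (val (chi x)) + \sum_(y : B | y \notin codom chi) M (val y).

(* min over all injections chi : A -> B (+oo if there is none, i.e. #|A| > #|B|). *)
Definition d_S_le (R : realType) (X : choiceType) (d : X -> X -> R) (M : X -> R)
    (A B : {fset X}) : \bar R :=
  \big[Order.min/+oo%E]_(chi : {ffun A -> B} | injectiveb chi) (d_chi d M chi)%:E.

Definition d_S (R : realType) (X : choiceType) (d : X -> X -> R) (M : X -> R)
    (A B : {fset X}) : \bar R :=
  if (#|` A|%fset <= #|` B|%fset)%N then d_S_le d M A B else d_S_le d M B A.

(* An injection chi : P -> Q can be modified, without increasing d_chi, so
   that it fixes a given common point c of P and Q.  If c = chi p, exchange
   the images of c and p (triangle inequality through c).  If c is not an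
   image, send c to itself: this trades d(c, chi c) + M c for M (chi c), which
   is at most d(chi c, c) + M c.  An injection fixing c restricts to an
   injection P \ c -> Q \ c of the same cost, since d(c, c) = 0 and c, being
   an image, carries no M-term; conversely such an injection extends by
   c |-> c.  Hence the common points can be removed one at a time without
   changing d_S. *)

From HB Require Import structures.
From mathcomp Require Import all_boot all_order all_algebra finmap.
From mathcomp Require Import reals constructive_ereal.
From mathcomp Require Import lra.
Import Order.TTheory GRing.Theory Num.Theory.
Local Open Scope fset_scope.
Local Open Scope ring_scope.

Lemma swap_involutive {T : eqType} (a b : T) :
  involutive [fun x => x with a |-> b, b |-> a].
Proof.
move=> x /=; case: (eqVneq x a) => [->|xa].
  by rewrite eqxx; case: eqVneq => [->|_]; rewrite ?eqxx.
case: (eqVneq x b) xa => [-> _|xb xa]; first by rewrite eqxx.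
by rewrite (negbTE xa) (negbTE xb).
Qed.

Section InjectionCost.
Local Set Implicit Arguments.
Local Unset Strict Implicit.

Variables (R : realType) (X : choiceType) (d : X -> X -> R) (M : X -> R).

(* An injection P -> Q is represented by a function on all of X; only its
   values on P matter. *)
Definition inj_into (P Q : {fset X}) (f : X -> X) : Prop :=
  {in P, forall x, f x \in Q} /\ {in P &, injective f}.

(* For f injective on P this is d_chi: rather than summing M over Q minus
   f(P), sum it over Q and subtract it over f(P). *)
Definition cost (P Q : {fset X}) (f : X -> X) : R :=
  \sum_(y <- Q) M y + \sum_(x <- P) (d x (f x) - M (f x)).

Lemma eq_in_cost (P Q : {fset X}) (f g : X -> X) :
  {in P, f =1 g} -> cost P Q f = cost P Q g.
Proof.
by move=> fg; rewrite /cost; apply: congr1; apply: eq_big_seq => x /fg ->.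
Qed.

Lemma d_chi_cost (P Q : {fset X}) (chi : {ffun P -> Q}) (f : X -> X) :
  injective chi -> (forall a, val (chi a) = f (val a)) ->
  d_chi d M chi = cost P Q f.
Proof.
move=> chi_inj chiE; rewrite /d_chi /cost !big_seq_fsetE.
under eq_bigr => a _ do rewrite chiE.
rewrite [in RHS](bigID (mem (codom chi))) /= -big_uniq; last first.
  by rewrite map_inj_uniq ?enum_uniq.
rewrite big_map big_enum sumrB /=.
under [X in _ = X + _ + _]eq_bigr => a _ do rewrite chiE.
lra.
Qed.

Lemma inj_into_ffun (P Q : {fset X}) (chi : {ffun P -> Q}) :
  injective chi ->
  exists2 f, inj_into P Q f & forall a, val (chi a) = f (val a).
Proof.
move=> chi_inj; pose f x := if insub x is Some a then val (chi a) else x.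
have fE a : f (val a) = val (chi a) by rewrite /f valK.
exists f => //; split=> [x xP | x y xP yP].
  by rewrite -[x]/(val [` xP]) fE fsvalP.
by rewrite -[x]/(val [` xP]) -[y]/(val [` yP]) !fE => /val_inj /chi_inj [].
Qed.

Lemma ffun_inj_into (P Q : {fset X}) (f : X -> X) :
  inj_into P Q f ->
  exists2 chi : {ffun P -> Q},
    injective chi & forall a, val (chi a) = f (val a).
Proof.
move=> [fPQ f_inj]; pose chi := [ffun a : P => [` fPQ _ (fsvalP a)] : Q].
have chiE a : val (chi a) = f (val a) by rewrite ffunE.
exists chi => // a b /(congr1 val); rewrite !chiE => /f_inj eq_ab.
by apply/val_inj/eq_ab; apply: fsvalP.
Qed.

Lemma le_d_S_le (P Q P' Q' : {fset X}) :
  (forall f, inj_into P Q f ->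
     exists2 g, inj_into P' Q' g & cost P' Q' g <= cost P Q f) ->
  (d_S_le d M P' Q' <= d_S_le d M P Q)%E.
Proof.
move=> improve.
apply: le_bigmin => [|chi /injectiveP chi_inj]; first exact: leey.
have [f fPQ chiE] := inj_into_ffun chi_inj.
have [g gPQ le_gf] := improve f fPQ.
have [chi' chi'_inj chi'E] := ffun_inj_into gPQ.
apply: (@bigmin_inf _ _ _ _ chi'); first exact/injectiveP.
by rewrite lee_fin (d_chi_cost chi_inj chiE) (d_chi_cost chi'_inj chi'E).
Qed.

Hypothesis d_xx : forall x, d x x = 0.
Hypothesis d_sym : forall x y, d x y = d y x.
Hypothesis d_triangle : forall x y z, d x z <= d x y + d y z.
Hypothesis M_le : forall x z, M x <= d x z + M z.

Lemma cost_fsetD1 (P Q : {fset X}) (f : X -> X) (c : X) :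
  c \in P -> c \in Q -> f c = c -> cost P Q f = cost (P `\ c) (Q `\ c) f.
Proof.
move=> cP cQ fc.
by rewrite /cost (big_fsetD1 c cQ) (big_fsetD1 c cP) /= fc d_xx; lra.
Qed.

Lemma inj_into_fsetD1 (P Q : {fset X}) (f : X -> X) (c : X) :
  inj_into P Q f -> {in P `\ c, forall x, f x != c} ->
  inj_into (P `\ c) (Q `\ c) f.
Proof.
move=> [fPQ f_inj] fx_neq_c; split=> [x xPc | x y].
  rewrite in_fsetD1 fx_neq_c // fPQ //.
  by move: xPc; rewrite in_fsetD1 => /andP[].
by rewrite !in_fsetD1 => /andP[_ xP] /andP[_ yP]; apply: f_inj.
Qed.

Lemma inj_into_fix (P Q : {fset X}) (f : X -> X) (c : X) :
  c \in Q -> inj_into (P `\ c) (Q `\ c) f -> inj_into P Q [eta f with c |-> c].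
Proof.
move=> cQ [fPQ f_inj].
have fPQc x : x \in P -> x != c -> f x \in Q `\ c.
  by move=> xP xc; apply: fPQ; rewrite in_fsetD1 xc.
split=> [x xP | x y xP yP] /=.
  by case: eqVneq => // xc; move: (fPQc x xP xc); rewrite in_fsetD1 => /andP[].
case: (eqVneq x c) => [->|xc]; case: (eqVneq y c) => [->|yc] //.
- by move=> cfy; move: (fPQc y yP yc); rewrite -cfy in_fsetD1 eqxx.
- by move=> fxc; move: (fPQc x xP xc); rewrite fxc in_fsetD1 eqxx.
- by apply: f_inj; rewrite in_fsetD1 ?xc ?yc.
Qed.

Lemma inj_into_swap (P Q : {fset X}) (f : X -> X) (c p : X) :
  c \in P -> p \in P -> inj_into P Q f ->
  inj_into P Q (f \o [fun x => x with c |-> p, p |-> c]).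
Proof.
move=> cP pP [fPQ f_inj]; set s := [fun x => _ with _ |-> _, _ |-> _].
have sP x : x \in P -> s x \in P by rewrite /=; case: eqP => // _; case: eqP.
split=> [x xP | x y xP yP /f_inj]; first exact: fPQ (sP x xP).
by move=> /(_ (sP x xP) (sP y yP)) /(can_inj (swap_involutive c p)).
Qed.

Lemma cost_swap_le (P Q : {fset X}) (f : X -> X) (c p : X) :
  c \in P -> p \in P -> p != c -> f p = c ->
  cost P Q (f \o [fun x => x with c |-> p, p |-> c]) <= cost P Q f.
Proof.
move=> cP pP pc fp; have pPc : p \in P `\ c by rewrite in_fsetD1 pc.
rewrite /cost !(big_fsetD1 c cP) !(big_fsetD1 p pPc) /=.
rewrite eqxx (negbTE pc) eqxx fp.
rewrite [X in _ + (_ + (_ + X))](eq_big_seq (fun x => d x (f x) - M (f x))).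
  by have := d_triangle p c (f c); rewrite d_xx; lra.
by move=> x; rewrite !in_fsetD1 => /and3P[/negbTE -> /negbTE -> _].
Qed.

Lemma cost_fix_le (P Q : {fset X}) (f : X -> X) (c : X) :
  c \in P -> cost P Q [eta f with c |-> c] <= cost P Q f.
Proof.
move=> cP; rewrite /cost !(big_fsetD1 c cP) /= eqxx.
rewrite [X in _ + (_ + X)](eq_big_seq (fun x => d x (f x) - M (f x))).
  by have := M_le (f c) c; rewrite d_sym d_xx; lra.
by move=> x; rewrite in_fsetD1 => /andP[/negbTE -> _].
Qed.

Lemma exists_inj_into_fixing (P Q : {fset X}) (f : X -> X) (c : X) :
  c \in P -> c \in Q -> inj_into P Q f ->
  exists2 g, inj_into P Q g & g c = c /\ cost P Q g <= cost P Q f.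
Proof.
move=> cP cQ fPQ; have [/imfsetP[p pP cfp] | c_notin] := boolP (c \in f @` P).
  have [pc | pc] := eqVneq p c; first by exists f; rewrite // {2}cfp pc.
  exists (f \o [fun x => x with c |-> p, p |-> c]); first exact: inj_into_swap.
  by split; [rewrite /= eqxx | apply: cost_swap_le].
have f_neq_c : {in P `\ c, forall x, f x != c}.
  move=> x; rewrite in_fsetD1 => /andP[_ xP].
  by apply: contraNneq c_notin => <-; apply: in_imfset.
exists [eta f with c |-> c]; first exact/inj_into_fix/inj_into_fsetD1.
by split; [rewrite /= eqxx | apply: cost_fix_le].
Qed.

Lemma d_S_le_fsetD1 (P Q : {fset X}) (c : X) :
  c \in P -> c \in Q -> d_S_le d M P Q = d_S_le d M (P `\ c) (Q `\ c).
Proof.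
move=> cP cQ; apply/le_anti/andP; split; apply: le_d_S_le => f fPQ.
  exists [eta f with c |-> c]; first exact: inj_into_fix.
  rewrite (cost_fsetD1 cP cQ) /= ?eqxx // (@eq_in_cost _ _ _ f) // => x.
  by rewrite in_fsetD1 /= => /andP[/negbTE ->].
have [g gPQ [gc le_gf]] := exists_inj_into_fixing cP cQ fPQ.
exists g; last by rewrite -cost_fsetD1.
apply: inj_into_fsetD1 => // x; rewrite in_fsetD1 => /andP[xc xP].
by apply: contraNneq xc => gxc; apply/eqP/gPQ.2; rewrite ?gc.
Qed.

Lemma d_S_le_fsetD (P Q : {fset X}) :
  d_S_le d M P Q = d_S_le d M (P `\` Q) (Q `\` P).
Proof.
have [n] := ubnP #|` P `&` Q|; elim: n P Q => // n IH P Q.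
have [PQ0 _ | [c]] := fset_0Vmem (P `&` Q).
  have PQ_disj : [disjoint P & Q] by apply/eqP.
  by rewrite (fsetDidPl _ _ PQ_disj) (fsetDidPl _ _ _) // fdisjoint_sym.
rewrite in_fsetI => /andP[cP cQ] PQ_lt; rewrite (d_S_le_fsetD1 cP cQ) IH.
  by congr d_S_le; apply/fsetP => x; rewrite !inE;
    case: eqVneq => [->|]; rewrite ?cP ?cQ ?andbF.
move: PQ_lt; rewrite -fsetDIl (cardfsD1 c (P `&` Q)) in_fsetI cP cQ.
by rewrite add1n ltnS.
Qed.

End InjectionCost.

Theorem corollary2p2 (R : realType) (X : choiceType) (d : X -> X -> R) (M : X -> R)
  (hd : is_metric d) (hb : bounded_metric d)
  (hM : forall x y z : X, d x y <= M x /\ M x <= d x z + M z)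
  (X1 X2 : {fset X}) :
  d_S d M X1 X2 = d_S d M (X1 `\` X2)%fset (X2 `\` X1)%fset.
Proof.
have [_ d0 d_sym d_triangle] := hd.
have d_xx x : d x x = 0 by apply/d0.
have M_le x z : M x <= d x z + M z by have [] := hM x x z.
have card_le : (#|` X1 `\` X2| <= #|` X2 `\` X1|)%N = (#|` X1| <= #|` X2|)%N.
  by rewrite -(cardfsID X2 X1) -(cardfsID X1 X2) fsetIC leq_add2l.
by rewrite /d_S card_le; case: ifP => _; apply: d_S_le_fsetD.
Qed.
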